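(* Let $X$ be a finite $T_0$-space with more than one point. If $x\in X$ is a maximum or a minimum of $X$, then $p_X(\lambda)=-\lambda\, p_{X\setminus\{x\}}(\lambda)$, where $p_Y(\lambda)=\det(Y_M-\lambda I)$.
   Context: A finite $T_0$-space is identified with a finite poset via $x\le y$ iff $U_x\subseteq U_y$, where $U_x$ is the minimal open set containing $x$; subsets carry the induced order. For a labelling $Y=\{y_1,\dots,y_m\}$, $Y_M=(y_{i,j})$ is the $m\times m$ matrix with $y_{i,j}=0$ if $y_i\le y_j$ and $y_{i,j}=1$ otherwise. *)

From mathcomp Require Import all_boot all_order all_algebra.
Set Implicit Arguments. Unset Strict Implicit. Unset Printing Implicit Defensive.
Import GRing.Theory.
Local Open Scope ring_scope.

Section FiniteSpaces.
Variable T : finType.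

(* A topology on the finite carrier T, given by its family of open sets.
   Since T is finite, closure under binary unions gives closure under
   arbitrary unions. *)
Definition is_topology (O : {set {set T}}) : bool :=
  [&& set0 \in O, setT \in O &
      [forall U in O, forall V in O, (U :|: V \in O) && (U :&: V \in O)]].

Definition T0_space (O : {set {set T}}) : Prop :=
  forall x y : T, x != y -> exists U, U \in O /\ (x \in U) != (y \in U).

Definition minopen (O : {set {set T}}) (x : T) : {set T} :=
  \bigcap_(U in O | x \in U) U.

Definition fle (O : {set {set T}}) (x y : T) : bool :=
  minopen O x \subset minopen O y.

Definition YM (O : {set {set T}}) (A : {set T}) : 'M[int]_#|A| :=
  \matrix_(i, j) (if fle O (enum_val i) (enum_val j) then 0 else 1).

Definition pY (O : {set {set T}}) (A : {set T}) : {poly int} :=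
  \det (map_mx polyC (YM O A) - 'X%:M).

End FiniteSpaces.

(* Let x be a maximum of Y.  The column of x in Y_M - lambda I is zero except
   for the diagonal entry -lambda, since y <= x for every y and x <= x.
   Expanding the determinant along that column leaves -lambda times the
   principal minor at x, which is (Y \ {x})_M - lambda I up to a simultaneous
   relabelling of rows and columns, and such a relabelling does not change the
   determinant.  For a minimum one expands along the row of x instead. *)
From mathcomp Require Import all_boot all_order all_algebra.
From mathcomp Require Import fingroup perm.
Import GRing.Theory.
Local Open Scope ring_scope.

Section DeterminantLemmas.
Variable R : comNzRingType.

Lemma cofactor_diag n (M : 'M[R]_n) i :
  cofactor M i i = \det (row' i (col' i M)).
Proof. by rewrite /cofactor addnn -signr_odd odd_double mul1r. Qed.

Lemma det_zero_col n (M : 'M[R]_n) i :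
  (forall j, j != i -> M j i = 0) -> \det M = M i i * \det (row' i (col' i M)).
Proof.
move=> M_col0; rewrite (expand_det_col _ i) (bigD1 i) //= big1 ?addr0.
  by rewrite cofactor_diag.
by move=> j /M_col0 ->; rewrite mul0r.
Qed.

Lemma det_zero_row n (M : 'M[R]_n) i :
  (forall j, j != i -> M i j = 0) -> \det M = M i i * \det (row' i (col' i M)).
Proof.
move=> M_row0; rewrite -det_tr (@det_zero_col _ _ i) => [|j ji]; last first.
  by rewrite mxE M_row0.
rewrite mxE -[in RHS]det_tr; congr (_ * \det _).
by apply/matrixP=> j k; rewrite !mxE.
Qed.

Lemma det_reindex m n (M : 'M[R]_m) (N : 'M[R]_n) (f : 'I_m -> 'I_n) :
  m = n -> injective f -> (forall i j, M i j = N (f i) (f j)) ->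
  \det M = \det N.
Proof.
move=> eq_mn f_inj MN; subst n; pose s : 'S_m := perm f_inj.
have -> : M = row_perm s (col_perm s N) by apply/matrixP=> i j; rewrite !mxE !permE.
rewrite row_permE col_permE !det_mulmx !det_perm odd_permV.
by rewrite mulrCA -signr_addb addbb mulr1.
Qed.

End DeterminantLemmas.

Section ExtremalPoint.
Variables (T : finType) (O : {set {set T}}) (A : {set T}) (x : T).
Hypothesis xA : x \in A.

Definition charYM (B : {set T}) : 'M[{poly int}]_#|B| :=
  map_mx polyC (YM O B) - 'X%:M.

Lemma pYE B : pY O B = \det (charYM B).
Proof. by []. Qed.

Lemma charYME B i j :
  charYM B i j =
  (if fle O (enum_val i) (enum_val j) then 0 else 1)%:P - 'X *+ (i == j).
Proof. by rewrite !mxE. Qed.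

Let ix : 'I_#|A| := enum_rank_in xA x.

Let ixK : enum_val ix = x.
Proof. exact: enum_rankK_in. Qed.

Lemma enum_val_lift_notx j : enum_val (lift ix j) \in A :\ x.
Proof.
rewrite !inE enum_valP andbT -ixK; apply: contraNneq (neq_lift ix j).
by move/enum_val_inj ->.
Qed.

Lemma det_minor_charYM :
  \det (row' ix (col' ix (charYM A))) = \det (charYM (A :\ x)).
Proof.
pose f j : 'I_#|A :\ x| :=
  enum_rank_in (enum_val_lift_notx j) (enum_val (lift ix j)).
have fK j : enum_val (f j) = enum_val (lift ix j).
  exact: enum_rankK_in (enum_val_lift_notx j).
have f_inj : injective f.
  by move=> j k /(congr1 enum_val); rewrite !fK => /enum_val_inj /lift_inj.
apply: (@det_reindex _ _ _ _ _ f) => // [|i j].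
  by rewrite (cardsD1 x A) xA.
by rewrite !mxE !fK (inj_eq f_inj) (inj_eq (@lift_inj _ ix)).
Qed.

Lemma pY_maximum : {in A, forall y, fle O y x} -> pY O A = - 'X * pY O (A :\ x).
Proof.
move=> x_max; rewrite !pYE -det_minor_charYM (@det_zero_col _ _ _ ix).
  by rewrite charYME ixK x_max // eqxx sub0r.
by move=> j /negPf jx; rewrite charYME ixK x_max ?enum_valP // jx subr0.
Qed.

Lemma pY_minimum : {in A, forall y, fle O x y} -> pY O A = - 'X * pY O (A :\ x).
Proof.
move=> x_min; rewrite !pYE -det_minor_charYM (@det_zero_row _ _ _ ix).
  by rewrite charYME ixK x_min // eqxx sub0r.
by move=> j /negPf jx; rewrite charYME ixK x_min ?enum_valP // eq_sym jx subr0.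
Qed.

End ExtremalPoint.

Theorem mainTheorem15 (T : finType) (O : {set {set T}}) :
  is_topology O -> T0_space O -> (1 < #|T|)%N ->
  forall x : T,
    ((forall y : T, fle O y x) \/ (forall y : T, fle O x y)) ->
    pY O [set: T] = - 'X * pY O ([set: T] :\ x).
Proof.
move=> _ _ _ x [x_max | x_min].
- by apply: pY_maximum => [|y _]; rewrite ?inE.
- by apply: pY_minimum => [|y _]; rewrite ?inE.
Qed.
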